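(* For all $t\ge0$ and $\tau>0$, the function $u\mapsto\Xi(u,t,\tau)$ is convex and essentially smooth on $\mathcal{K}_{t,\tau}$.
   Context: Parameters $v,\xi>0$, $\rho\in(-1,1)$, $\bar\rho:=\sqrt{1-\rho^2}$. $\Xi(u,t,\tau):=\frac{uv}{\xi(\bar\rho\cot(\frac12\xi\bar\rho\tau u)-\rho)-\frac12\xi^2tu}$ with $\Xi(0,t,\tau):=0$; $\mathcal{K}_{t,\tau}$ is the connected component containing $0$ of $\{u\in\mathbb{R}:\Xi(u,0,\tau)<\frac{2v}{\xi^2t}\}$ ($2v/(\xi^2t):=+\infty$ if $t=0$). A convex function $h$ on an interval is essentially smooth if its interior is nonempty, $h$ is differentiable there, and $|h'(u_n)|\to\infty$ for every sequence $u_n$ in the interior converging to a boundary point. *)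

From HB Require Import structures.
From mathcomp Require Import all_boot all_order all_algebra.
From mathcomp Require Import all_classical all_reals all_analysis.
Set Implicit Arguments. Unset Strict Implicit. Unset Printing Implicit Defensive.
Import Order.TTheory GRing.Theory Num.Theory.
Import numFieldNormedType.Exports.
Local Open Scope classical_set_scope.
Local Open Scope ring_scope.

Section Defs.
Variable R : realType.

Definition cot (x : R) : R := cos x / sin x.

Definition rhobar (rho : R) : R := Num.sqrt (1 - rho ^+ 2).

Definition Xi_arg (xi rho tau u : R) : R := xi * rhobar rho * tau * u / 2.

Definition Xi_den (xi rho u t tau : R) : R :=
  xi * (rhobar rho * cot (Xi_arg xi rho tau u) - rho) - xi ^+ 2 * t * u / 2.

Definition Xi (v xi rho u t tau : R) : R :=
  if u == 0 then 0 else u * v / Xi_den xi rho u t tau.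

Definition Xi_defined (xi rho u t tau : R) : Prop :=
  u = 0 \/ (sin (Xi_arg xi rho tau u) != 0 /\ Xi_den xi rho u t tau != 0).

(* {u : Xi(u,0,tau) < 2v/(xi^2 t)}, with 2v/(xi^2 t) = +oo when t = 0 *)
Definition K_set (v xi rho t tau : R) : set R :=
  [set u | Xi_defined xi rho u 0 tau /\
           (t = 0 \/ Xi v xi rho u 0 tau < 2 * v / (xi ^+ 2 * t))].

Definition K_tt (v xi rho t tau : R) : set R :=
  connected_component (K_set v xi rho t tau) 0.

Definition essentially_smooth (D : set R) (h : R -> R) : Prop :=
  [/\ interior D !=set0,
      (forall x, interior D x -> derivable h x 1) &
      (forall (u : R ^nat) (b : R),
         (forall n, interior D (u n)) ->
         u @ \oo --> b ->
         (closure D `\` interior D) b ->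
         (fun n => `| derive1 h (u n) |) @ \oo --> +oo)].

End Defs.

From HB Require Import structures.
From mathcomp Require Import all_boot all_order all_algebra.
From mathcomp Require Import all_classical all_reals all_analysis.
From mathcomp Require Import ring lra.
Set Implicit Arguments. Unset Strict Implicit. Unset Printing Implicit Defensive.
Import Order.TTheory GRing.Theory Num.Theory.
Import numFieldNormedType.Exports.
Local Open Scope classical_set_scope.
Local Open Scope ring_scope.
Local Open Scope convex_scope.

(* Put theta = asin rho, omega = xi rhobar tau / 2 and phase u = omega u + theta.
   Then rhobar cot (omega u) - rho = cos (phase u) / sin (omega u), so on the
   interval where cos (phase u) > 0 we get Xi(u,0,tau) = Xi0 u, where
   Xi0 u = v u sin (omega u) / (xi cos (phase u)) >= 0, and Xi0'' >= 0 reduces to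
   the tangent inequality cos P + (P - theta) sin P >= 0 for the cosine.
   For t >= 0, Xi(u,t,tau) = Xi0 u / (1 - kappa Xi0 u) with kappa = xi^2 t / (2 v),
   an increasing convex function of Xi0 below its pole, and K_{t,tau} is the
   sublevel interval {kappa Xi0 < 1}: hence convexity.  At a boundary point of
   K_{t,tau} the denominator cos (phase u) - kappa v u sin (omega u) / xi tends to 0
   while the numerator stays positive, so Xi blows up; as Xi is convex with
   Xi(0) = 0, |Xi'(u)| >= Xi(u) / |u| blows up as well. *)

Lemma mul_cos_le_sin (R : realType) (y : R) : 0 <= y <= pi / 2 -> y * cos y <= sin y.
Proof.
move=> /andP[y0 y1].
pose g (z : R) := sin z - z * cos z.
have dg z : is_derive z (1 : R) g (z * sin z).
  by apply: is_derive_eq; rewrite [_%:A]mulr1 -[z *: _]/(z * - sin z); ring.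
have : g 0 <= g y.
  apply: (@ger0_derive1_ndecr R g 0 (pi / 2)) => //.
  - move=> z; rewrite in_itv /= => /andP[z0 z1].
    rewrite derive1E (@derive_val _ _ _ _ _ _ _ (dg z)); apply: mulr_ge0; first exact: ltW.
    have pi0 : 0 < pi :> R := pi_gt0 R.
    by apply: sin_ge0_pi; apply/andP; split; lra.
  - apply: continuous_subspaceT => z.
    exact/differentiable_continuous/derivable1_diffP/(@ex_derive _ _ _ _ _ _ _ (dg z)).
by rewrite /g sin0 mul0r subr0 subr_ge0.
Qed.

(* The tangent line of the concave cosine at [P] stays above [cos], which is
   positive at [th]. *)
Lemma cos_tangent_ge0 (R : realType) (P th : R) :
  -(pi / 2) < P < pi / 2 -> -(pi / 2) < th < pi / 2 -> 0 <= cos P + (P - th) * sin P.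
Proof.
move=> /andP[P1 P2] /andP[t1 t2].
have pi0 : 0 < pi :> R := pi_gt0 R.
have [P0|P0] := leP 0 P.
- have sP : 0 <= sin P by apply: sin_ge0_pi; rewrite P0 /=; lra.
  have sinE : sin (pi / 2 - P) = cos P by rewrite sinB cos_pihalf sin_pihalf; ring.
  have cosE : cos (pi / 2 - P) = sin P by rewrite cosB cos_pihalf sin_pihalf; ring.
  have := @mul_cos_le_sin R (pi / 2 - P); rewrite sinE cosE => /(_ _) h.
  have : 0 <= (pi / 2 - th) * sin P by apply: mulr_ge0 => //; lra.
  have : (pi / 2 - P) * sin P <= cos P by apply: h; lra.
  nra.
- have sP : sin P <= 0 by rewrite -oppr_ge0 -sinN; apply: sin_ge0_pi; lra.
  have sinE : sin (P + pi / 2) = cos P by rewrite sinD cos_pihalf sin_pihalf; ring.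
  have cosE : cos (P + pi / 2) = - sin P by rewrite cosD cos_pihalf sin_pihalf; ring.
  have := @mul_cos_le_sin R (P + pi / 2); rewrite sinE cosE => /(_ _) h.
  have : 0 <= (pi / 2 + th) * (- sin P) by apply: mulr_ge0 => //; lra.
  have : (P + pi / 2) * - sin P <= cos P by apply: h; lra.
  nra.
Qed.

Section moebius.
Variables (R : realFieldType) (k : R).
Hypothesis k_ge0 : 0 <= k.

Definition moebius (x : R) := x / (1 - k * x).

Lemma moebius_le x y : x <= y -> k * y < 1 -> moebius x <= moebius y.
Proof.
move=> xy ky; have kxy : k * x <= k * y by rewrite ler_wpM2l.
have kx0 : 0 < 1 - k * x by rewrite subr_gt0; apply: le_lt_trans ky.
have ky0 : 0 < 1 - k * y by rewrite subr_gt0.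
rewrite -subr_ge0.
have -> : moebius y - moebius x = (y - x) / ((1 - k * x) * (1 - k * y)).
  by rewrite /moebius; field; rewrite !gt_eqF.
by rewrite divr_ge0 ?subr_ge0 // ltW // mulr_gt0.
Qed.

Lemma moebius_convex x y l : k * x < 1 -> k * y < 1 -> 0 <= l <= 1 ->
  moebius (l * x + (1 - l) * y) <= l * moebius x + (1 - l) * moebius y.
Proof.
move=> kx ky /andP[l0 l1].
have kx0 : 0 < 1 - k * x by rewrite subr_gt0.
have ky0 : 0 < 1 - k * y by rewrite subr_gt0.
have kz0 : 0 < 1 - k * (l * x + (1 - l) * y).
  have [->|l_gt0] := eqVneq l 0; first by rewrite mul0r add0r subr0 mul1r.
  have : 0 < l * (1 - k * x) by rewrite pmulr_rgt0 // lt_neqAle eq_sym l_gt0.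
  have : 0 <= (1 - l) * (1 - k * y) by apply: mulr_ge0; rewrite ?subr_ge0 // ltW.
  lra.
rewrite -subr_ge0.
have -> : l * moebius x + (1 - l) * moebius y - moebius (l * x + (1 - l) * y) =
    l * (1 - l) * k * (x - y) ^+ 2 /
    ((1 - k * x) * (1 - k * y) * (1 - k * (l * x + (1 - l) * y))).
  by rewrite /moebius; field; rewrite !gt_eqF.
apply: divr_ge0; last by rewrite ltW // !mulr_gt0.
by rewrite mulr_ge0 ?sqr_ge0 // !mulr_ge0 // subr_ge0.
Qed.

End moebius.

Lemma cvgr_div_pinfty {T : Type} {F : set_system T} {FF : Filter F}
    (R : realFieldType) (f g : T -> R) (c : R) :
  0 < c -> f @ F --> c -> (\forall x \near F, 0 < g x) -> g @ F --> 0 ->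
  (fun x => f x / g x) @ F --> +oo.
Proof.
move=> c0 fc g0 g_0; apply/cvgryPge => A.
have ginv : (fun x => (g x)^-1) @ F --> +oo by apply/cvgrVy.
near=> x.
have fx : c / 2 <= f x by near: x; apply: (cvgr_ge _ fc); lra.
have gx : 2 * A / c <= (g x)^-1 by near: x; apply: cvgry_ge.
have gx0 : 0 <= (g x)^-1 by rewrite invr_ge0 ltW //; near: x.
have -> : A = c / 2 * (2 * A / c) by field; rewrite gt_eqF.
apply: le_trans (_ : c / 2 * (g x)^-1 <= _); last by rewrite ler_wpM2r.
by rewrite ler_wpM2l // divr_ge0 // ltW.
Unshelve. all: by end_near. Qed.

Lemma is_interval_conv (R : realFieldType) (D : set R) (x y : R) (l : {i01 R}) :
  is_interval D -> D x -> D y -> D ((x : R^o) <| l |> y).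
Proof.
have conv_between (a b : R) (t : {i01 R}) : a <= b -> a <= (a : R^o) <| t |> b <= b.
  by move=> ab; have := convR_itv t ab; rewrite in_itv.
move=> iD Dx Dy; have [xy|/ltW yx] := leP x y; first exact: iD Dx Dy _ (conv_between _ _ _ xy).
by rewrite convC; exact: iD Dy Dx _ (conv_between _ _ _ yx).
Qed.

Lemma conv_lt (R : realFieldType) (a b c : R) (t : {i01 R}) :
  a < c -> b < c -> (a : R^o) <| t |> b < c.
Proof.
move=> ac bc; have [ab|/ltW ba] := leP a b; first exact: le_lt_trans (conv_le _ ab) bc.
by rewrite convC; exact: le_lt_trans (conv_le _ ba) ac.
Qed.

Lemma convex_functionMl (R : realFieldType) (D : set R) (f : R -> R) (c : R) :
  0 <= c -> convex_function D f -> convex_function D (fun x => c * f x).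
Proof.
move=> c0 cf l x y Dx Dy; have := cf l x y Dx Dy; rewrite !convRE => h.
by apply: le_trans (ler_wpM2l c0 h) _; rewrite mulrDr [c * (_ * f x)]mulrCA [c * (_ * f y)]mulrCA.
Qed.

Lemma convex_sublevel_is_interval (R : realFieldType) (D : set R) (f : R -> R) (c : R) :
  is_interval D -> convex_function D f -> is_interval [set x | D x /\ f x < c].
Proof.
move=> iD cf x y [Dx fx] [Dy fy] z xzy; split; first exact: iD Dx Dy _ xzy.
case/andP: xzy => xz zy; have [exy|xy] := eqVneq x y.
  by move: zy; rewrite -exy => zx; have -> : z = x by apply/eqP; rewrite eq_le zx xz.
have yx0 : 0 < y - x by rewrite subr_gt0 lt_neqAle xy (le_trans xz zy).
have l0 : 0 <= (y - z) / (y - x) by apply: divr_ge0; [rewrite subr_ge0 | exact: ltW].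
have l1 : (y - z) / (y - x) <= 1 by rewrite ler_pdivrMr // mul1r lerD2l lerN2.
have zE : z = (x : R^o) <| Itv01 l0 l1 |> y by rewrite convRE /= /unstable.onem; field; rewrite gt_eqF.
rewrite zE; exact: le_lt_trans (cf _ x y (mem_set Dx) (mem_set Dy)) (conv_lt _ fx fy).
Qed.

Lemma ge0_derive2_convex_function (R : realType) (f : R -> R) (a b : R) :
  (forall x, a < x < b -> derivable f x 1) ->
  (forall x, a < x < b -> derivable ('D_1 f) x 1) ->
  (forall x, a < x < b -> 0 <= 'D_1 ('D_1 f) x) ->
  convex_function [set x | a < x < b] f.
Proof.
move=> df ddf ddf_ge0.
have cf x : a < x < b -> {for x, continuous f}.
  by move=> /df /derivable1_diffP /differentiable_continuous.
suff conv_le x y (l : {i01 R}) : a < x < b -> a < y < b -> x <= y ->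
    f ((x : R^o) <| l |> y) <= (f x : R^o) <| l |> f y.
  move=> l x y /set_mem xab /set_mem yab; have [xy|/ltW yx] := leP x y; first exact: conv_le.
  by rewrite convC [leRHS]convC; apply: conv_le.
move=> /andP[ax xb] /andP[ay yb] xy.
have inab z : x < z < y -> a < z < b.
  by case/andP=> xz zy; rewrite (lt_trans ax xz) (lt_trans zy yb).
apply: second_derivative_convex => //.
- by move=> z /inab; apply: ddf_ge0.
- by apply/cvg_at_left_filter/cf; rewrite ay yb.
- by apply/cvg_at_right_filter/cf; rewrite ax xb.
- by move=> z; rewrite in_itv /= => /inab; apply: df.
- by move=> z; rewrite in_itv /= => /inab; apply: ddf.
Qed.

Lemma rhobar_gt0 (R : realType) (rho : R) : -1 < rho < 1 -> 0 < rhobar rho.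
Proof.
move=> /andP[r1 r2]; have : 0 < (1 - rho) * (1 + rho) by apply: mulr_gt0; lra.
by rewrite /rhobar sqrtr_gt0; nra.
Qed.

Section Xi_properties.
Variables (R : realType) (v xi rho t tau : R).
Hypotheses (v_gt0 : 0 < v) (xi_gt0 : 0 < xi) (rho_gtN1 : -1 < rho) (rho_lt1 : rho < 1)
  (t_ge0 : 0 <= t) (tau_gt0 : 0 < tau).

Let rb := rhobar rho.
Let theta := asin rho.
Let omega := xi * rb * tau / 2.
Let phase u := omega * u + theta.
Let umin := (- (pi / 2) - theta) / omega.
Let umax := (pi / 2 - theta) / omega.

Let rb_gt0 : 0 < rb.
Proof. by apply: rhobar_gt0; rewrite rho_gtN1 rho_lt1. Qed.

Let sin_theta : sin theta = rho.
Proof. by rewrite asinK // in_itv /= !ltW. Qed.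

Let cos_theta : cos theta = rb.
Proof. by rewrite cos_asin // !ltW. Qed.

Let theta_bounds : -(pi / 2) < theta < pi / 2.
Proof. by rewrite asin_gtNpi2 ?asin_ltpi2 // ?rho_gtN1 ?rho_lt1 ltW. Qed.

Let omega_gt0 : 0 < omega.
Proof. by rewrite divr_gt0 // !mulr_gt0. Qed.

Let Xi_argE u : Xi_arg xi rho tau u = omega * u.
Proof. by rewrite /Xi_arg /omega /rb; field. Qed.

Let sin_omega u : sin (omega * u) = rb * sin (phase u) - rho * cos (phase u).
Proof.
have -> : omega * u = phase u - theta by rewrite /phase; ring.
by rewrite sinB sin_theta cos_theta; ring.
Qed.

Let cos_phase u : cos (phase u) = rb * cos (omega * u) - rho * sin (omega * u).
Proof. by rewrite /phase cosD sin_theta cos_theta; ring. Qed.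

Let phase_umin : phase umin = - (pi / 2).
Proof. by rewrite /phase /umin; field; rewrite gt_eqF. Qed.

Let phase_umax : phase umax = pi / 2.
Proof. by rewrite /phase /umax; field; rewrite gt_eqF. Qed.

Let phase_le_umax u : (u <= umax) = (phase u <= pi / 2).
Proof. by rewrite -phase_umax /phase lerD2r ler_pM2l. Qed.

Let phase_lt_umax u : (u < umax) = (phase u < pi / 2).
Proof. by rewrite -phase_umax /phase ltrD2r ltr_pM2l. Qed.

Let phase_ge_umin u : (umin <= u) = (- (pi / 2) <= phase u).
Proof. by rewrite -phase_umin /phase lerD2r ler_pM2l. Qed.

Let phase_gt_umin u : (umin < u) = (- (pi / 2) < phase u).
Proof. by rewrite -phase_umin /phase ltrD2r ltr_pM2l. Qed.

Let mul_sin_omega_gt0 u : umin <= u <= umax -> u != 0 -> 0 < u * sin (omega * u).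
Proof.
rewrite phase_ge_umin phase_le_umax /phase => /andP[p1 p2] u0.
have pi_gt0 : 0 < pi :> R := pi_gt0 R.
have /andP[t1 t2] := theta_bounds.
have [u_lt0|u_ge0] := ltP u 0.
  have : omega * u < 0 by rewrite pmulr_rlt0.
  have -> : u * sin (omega * u) = - u * sin (- (omega * u)) by rewrite sinN; ring.
  move=> ou; apply: mulr_gt0; first by rewrite oppr_gt0.
  apply: sin_gt0_pi; apply/andP; split; lra.
have u_gt0 : 0 < u by rewrite lt_neqAle eq_sym u0.
have : 0 < omega * u by rewrite mulr_gt0.
move=> ou; apply: mulr_gt0 => //; apply: sin_gt0_pi; apply/andP; split; lra.
Qed.

Let Dom0 u := umin < u < umax.

Let Dom0_0 : Dom0 0.
Proof.
have /andP[t1 t2] := theta_bounds.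
by rewrite /Dom0 phase_gt_umin phase_lt_umax /phase mulr0 add0r t1 t2.
Qed.

Let Dom0_closed u : Dom0 u -> umin <= u <= umax.
Proof. by case/andP=> h1 h2; rewrite !ltW. Qed.

Let cos_phase_gt0 u : Dom0 u -> 0 < cos (phase u).
Proof. by rewrite /Dom0 phase_gt_umin phase_lt_umax; apply: cos_gt0_pihalf. Qed.

Let Xi0 u := v / xi * (rb * (u * tan (phase u)) - rho * u).

Let num u := v / xi * (u * sin (omega * u)).

Let Xi0E u : Dom0 u -> Xi0 u = num u / cos (phase u).
Proof.
move=> h; have c0 := cos_phase_gt0 h.
by rewrite /Xi0 /num /tan sin_omega; field; rewrite !gt_eqF.
Qed.

Let num_ge0 u : umin <= u <= umax -> 0 <= num u.
Proof.
move=> h; have [->|u0] := eqVneq u 0; first by rewrite /num !(mul0r, mulr0).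
by rewrite /num mulr_ge0 ?divr_ge0 ?ltW // mul_sin_omega_gt0.
Qed.

Let Xi0_ge0 u : Dom0 u -> 0 <= Xi0 u.
Proof.
move=> h; rewrite Xi0E //; apply: divr_ge0; last exact/ltW/cos_phase_gt0.
exact/num_ge0/Dom0_closed.
Qed.

Let Xi0_0 : Xi0 0 = 0.
Proof. by rewrite /Xi0 !(mul0r, mulr0, subr0). Qed.

Let is_derive_phase u : is_derive u (1 : R) phase omega.
Proof. by apply: is_derive_eq; rewrite /GRing.scale /=; ring. Qed.

Let is_derive_tan_phase u : Dom0 u ->
  is_derive u (1 : R) (fun z => tan (phase z)) ((cos (phase u))^-2 * omega).
Proof.
move=> h; have c0 : cos (phase u) != 0 by rewrite gt_eqF // cos_phase_gt0.
exact: (is_derive1_comp (is_derive_tan c0) (is_derive_phase u)).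
Qed.

Let dXi0 u := v / xi * (rb * (tan (phase u) + u * (omega / cos (phase u) ^+ 2)) - rho).

Let ddXi0 u :=
  v / xi * rb * (2 * omega / cos (phase u) ^+ 2) * (1 + omega * u * tan (phase u)).

Let is_derive_Xi0 u : Dom0 u -> is_derive u (1 : R) Xi0 (dXi0 u).
Proof.
move=> h; have c0 := cos_phase_gt0 h; have := is_derive_tan_phase h.
rewrite /Xi0 /dXi0 => dt; apply: is_derive_eq; rewrite /GRing.scale /=.
by field; rewrite !gt_eqF.
Qed.

Let is_derive_dXi0 u : Dom0 u -> is_derive u (1 : R) dXi0 (ddXi0 u).
Proof.
move=> h; have c0 := cos_phase_gt0 h; have := is_derive_tan_phase h.
have dc := is_derive1_comp (is_derive_cos (phase u)) (is_derive_phase u).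
have dc2 : is_derive u (1 : R) (fun z => (cos (phase z) ^+ 2)^-1)
    (- (cos (phase u) ^+ 2) ^-2 *: (2 * cos (phase u) * (- sin (phase u) * omega))).
  apply: is_deriveV; first by rewrite expf_neq0 // gt_eqF.
  by apply: is_derive_eq; rewrite /GRing.scale /=; ring.
rewrite /dXi0 /ddXi0 => dt; apply: is_derive_eq; rewrite /GRing.scale /= /tan.
by field; rewrite !gt_eqF.
Qed.

Let ddXi0_ge0 u : Dom0 u -> 0 <= ddXi0 u.
Proof.
move=> h; have c0 := cos_phase_gt0 h.
have hphase : -(pi / 2) < phase u < pi / 2 by rewrite -phase_gt_umin -phase_lt_umax.
have := cos_tangent_ge0 hphase theta_bounds.
have -> : phase u - theta = omega * u by rewrite /phase; ring.
rewrite /ddXi0; have -> : 1 + omega * u * tan (phase u) =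
    (cos (phase u) + omega * u * sin (phase u)) / cos (phase u).
  by rewrite /tan; field; rewrite gt_eqF.
move=> tangent; apply: mulr_ge0; last by apply: divr_ge0 => //; exact: ltW.
apply/ltW/mulr_gt0; first by rewrite mulr_gt0 ?divr_gt0.
by rewrite divr_gt0 ?mulr_gt0 ?exprn_gt0.
Qed.

Let Dom0_nbhs u : Dom0 u -> \forall w \near u, Dom0 w.
Proof.
move=> h; have : u \in `]umin, umax[ by rewrite in_itv.
by move/near_in_itvoo; apply: filterS => w; rewrite in_itv.
Qed.

Let derive_Xi0_nbhs u : Dom0 u -> \forall w \near u, 'D_1 Xi0 w = dXi0 w.
Proof.
by move=> h; apply: filterS (Dom0_nbhs h) => w hw; rewrite (@derive_val _ _ _ _ _ _ _ (is_derive_Xi0 hw)).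
Qed.

Let Xi0_convex : convex_function [set u | Dom0 u] Xi0.
Proof.
apply: ge0_derive2_convex_function => u h.
- exact: (@ex_derive _ _ _ _ _ _ _ (is_derive_Xi0 h)).
- apply: near_eq_derivable (@ex_derive _ _ _ _ _ _ _ (is_derive_dXi0 h)).
  by apply: filterS (derive_Xi0_nbhs h) => w ->.
- rewrite (near_eq_derive _ (derive_Xi0_nbhs h)).
  by rewrite (@derive_val _ _ _ _ _ _ _ (is_derive_dXi0 h)); apply: ddXi0_ge0.
Qed.

Let num_continuous (u : R) : {for u, continuous num}.
Proof.
have : derivable num u 1 by rewrite /num; apply: ex_derive.
by move/derivable1_diffP/differentiable_continuous.
Qed.

Let cos_phase_continuous (u : R) : {for u, continuous (fun w => cos (phase w))}.
Proof.
have : derivable (fun w => cos (phase w)) u 1 by apply: ex_derive.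
by move/derivable1_diffP/differentiable_continuous.
Qed.

Let Xi0_continuous u : Dom0 u -> {for u, continuous Xi0}.
Proof.
move=> h; have := @ex_derive _ _ _ _ _ _ _ (is_derive_Xi0 h).
by move/derivable1_diffP/differentiable_continuous.
Qed.

Let Xi_denE s u : sin (omega * u) != 0 ->
  Xi_den xi rho u s tau = xi * cos (phase u) / sin (omega * u) - xi ^+ 2 * s * u / 2.
Proof. by move=> s0; rewrite /Xi_den /cot -/rb Xi_argE cos_phase; field. Qed.

Let Xi_moebius s u : Dom0 u -> 1 - xi ^+ 2 * s / (2 * v) * Xi0 u != 0 ->
  Xi v xi rho u s tau = moebius (xi ^+ 2 * s / (2 * v)) (Xi0 u).
Proof.
move=> h; set c := xi ^+ 2 * s / (2 * v) => w0; rewrite /moebius.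
have [->|u0] := eqVneq u 0; first by rewrite /Xi eqxx Xi0_0 mul0r.
have s0 : sin (omega * u) != 0.
  by apply: contraTneq (mul_sin_omega_gt0 (Dom0_closed h) u0) => ->; rewrite mulr0 ltxx.
have c0 := cos_phase_gt0 h.
have denE : Xi_den xi rho u s tau = xi * cos (phase u) / sin (omega * u) * (1 - c * Xi0 u).
  by rewrite Xi_denE // Xi0E // /num /c; field; rewrite s0 !gt_eqF.
rewrite /Xi (negbTE u0) denE {2}Xi0E // /num; field.
by rewrite w0 s0 !gt_eqF.
Qed.

Let kappa := xi ^+ 2 * t / (2 * v).

Let kappa_ge0 : 0 <= kappa.
Proof. by rewrite divr_ge0 ?mulr_ge0 ?sqr_ge0 // ltW. Qed.

Let Xi_t0 u : Dom0 u -> Xi v xi rho u 0 tau = Xi0 u.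
Proof.
move=> h; rewrite Xi_moebius // /moebius !(mulr0, mul0r, subr0) ?divr1 // oner_neq0.
Qed.

Definition Xi_dom := [set u | Dom0 u /\ kappa * Xi0 u < 1].

Let XiE u : Xi_dom u -> Xi v xi rho u t tau = moebius kappa (Xi0 u).
Proof. by case=> h ku; rewrite Xi_moebius // subr_eq0 eq_sym lt_eqF. Qed.

Let Xi_threshold u : Dom0 u -> t != 0 ->
  (Xi v xi rho u 0 tau < 2 * v / (xi ^+ 2 * t)) = (kappa * Xi0 u < 1).
Proof.
move=> h t0; have kappa_gt0 : 0 < kappa.
  by rewrite divr_gt0 ?mulr_gt0 ?exprn_gt0 // lt_neqAle eq_sym t0.
rewrite Xi_t0 // -(ltr_pM2l kappa_gt0); congr (_ < _).
by rewrite /kappa; field; rewrite t0 !gt_eqF.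
Qed.

Let Xi_dom_sub_K : Xi_dom `<=` K_set v xi rho t tau.
Proof.
move=> u [h ku]; split.
  have [->|u0] := eqVneq u 0; [by left | right].
  have s0 : sin (omega * u) != 0.
    by apply: contraTneq (mul_sin_omega_gt0 (Dom0_closed h) u0) => ->; rewrite mulr0 ltxx.
  rewrite Xi_argE Xi_denE // !(mulr0, mul0r, subr0); split => //.
  by rewrite mulf_neq0 ?invr_eq0 // mulf_neq0 // gt_eqF // cos_phase_gt0.
by have [->|t0] := eqVneq t 0; [left | right; rewrite Xi_threshold].
Qed.

Let K_cos_phase u : K_set v xi rho t tau u -> cos (phase u) != 0.
Proof.
move=> [[->|[s0 d0]] _].
  by rewrite /phase mulr0 add0r cos_theta gt_eqF.
move: d0; rewrite Xi_argE in s0; rewrite Xi_denE // !(mulr0, mul0r, subr0).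
by apply: contra => /eqP ->; rewrite mulr0 mul0r.
Qed.

Let K_Dom0_Xi_dom u : K_set v xi rho t tau u -> Dom0 u -> Xi_dom u.
Proof.
move=> [_ kt] h; split => //.
have [t0|t0] := eqVneq t 0; first by rewrite /kappa t0 !(mulr0, mul0r) ltr01.
by case: kt => [/eqP|]; [rewrite (negbTE t0) | rewrite Xi_threshold].
Qed.

Let Xi_dom_interval : is_interval Xi_dom.
Proof.
apply: convex_sublevel_is_interval (convex_functionMl kappa_ge0 Xi0_convex).
move=> x y /andP[x1 _] /andP[_ y2] z /andP[xz zy].
by rewrite /= /Dom0 (lt_le_trans x1 xz) (le_lt_trans zy y2).
Qed.

Let Xi_dom_0 : Xi_dom 0.
Proof. by split; [exact: Dom0_0 | rewrite Xi0_0 mulr0 ltr01]. Qed.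

Lemma K_ttE : K_tt v xi rho t tau = Xi_dom.
Proof.
apply/seteqP; split; last first.
  move=> u Du; exists Xi_dom => //; split => //.
  by apply/connected_intervalP.
move=> u [C [C0 CK /connected_intervalP iC] Cu].
apply: K_Dom0_Xi_dom; first exact: CK.
have /andP[umin_lt0 umax_gt0] := Dom0_0.
rewrite /Dom0 !ltNge; apply/andP; split; apply/negP => hu.
- have /CK/K_cos_phase : C umin by apply: (iC u 0) => //; rewrite hu ltW.
  by rewrite phase_umin cosN cos_pihalf eqxx.
- have /CK/K_cos_phase : C umax by apply: (iC 0 u) => //; rewrite hu ltW.
  by rewrite phase_umax cos_pihalf eqxx.
Qed.

Let Xi_dom_nbhs u : Xi_dom u -> \forall w \near u, Xi_dom w.
Proof.
move=> [h ku]; have kX : (fun w => kappa * Xi0 w) @ u --> kappa * Xi0 u.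
  by apply: cvgMr; exact: Xi0_continuous.
near=> w; split; first by near: w; exact: Dom0_nbhs.
by near: w; exact: cvgr_lt kX 1 ku.
Unshelve. all: by end_near. Qed.

Let interior_Xi_dom : interior Xi_dom = Xi_dom.
Proof. by apply/seteqP; split; [exact: interior_subset | move=> u /Xi_dom_nbhs]. Qed.

Lemma Xi_convex : convex_function Xi_dom (fun u => Xi v xi rho u t tau).
Proof.
move=> l x y /set_mem Dx /set_mem Dy.
have Dz := is_interval_conv l Xi_dom_interval Dx Dy.
rewrite !XiE //; case: Dx Dy Dz => [hx kx] [hy ky] [hz _].
have [l0 l1] : 0 <= l%:num /\ l%:num <= 1 by [].
apply: le_trans (moebius_le _ (Xi0_convex l (mem_set hx) (mem_set hy)) _) _ => //.
  have := conv_lt l kx ky; rewrite !convRE /= /unstable.onem.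
  by rewrite mulrDr ![kappa * (_ * _)]mulrCA.
by rewrite convRE /= /unstable.onem; apply: moebius_convex; rewrite ?l0.
Qed.

Let is_derive_moebius_Xi0 u : Xi_dom u ->
  is_derive u (1 : R) (fun w => moebius kappa (Xi0 w)) (dXi0 u / (1 - kappa * Xi0 u) ^+ 2).
Proof.
move=> [h ku]; have dx := is_derive_Xi0 h.
have w0 : 1 - kappa * Xi0 u != 0 by rewrite subr_eq0 gt_eqF.
have dw : is_derive u (1 : R) (fun w => 1 - kappa * Xi0 w) (- (kappa * dXi0 u)).
  by apply: is_derive_eq; rewrite /GRing.scale /=; ring.
have := @is_deriveV R (fun w => 1 - kappa * Xi0 w) u _ 1 w0 dw.
by rewrite /moebius => dV; apply: is_derive_eq; rewrite /GRing.scale /=; field.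
Qed.

Let Xi_nbhs u : Xi_dom u -> \forall w \near u, Xi v xi rho w t tau = moebius kappa (Xi0 w).
Proof. by move=> Du; apply: filterS (Xi_dom_nbhs Du) => w; apply: XiE. Qed.

Let Xi_derivable u : Xi_dom u -> derivable (fun w => Xi v xi rho w t tau) u 1.
Proof.
move=> Du; apply: near_eq_derivable (@ex_derive _ _ _ _ _ _ _ (is_derive_moebius_Xi0 Du)).
by apply: filterS (Xi_nbhs Du) => w ->.
Qed.

Let derive_XiE u : Xi_dom u ->
  derive1 (fun w => Xi v xi rho w t tau) u = dXi0 u / (1 - kappa * Xi0 u) ^+ 2.
Proof.
move=> Du; rewrite derive1E (near_eq_derive _ (Xi_nbhs Du)).
by rewrite (@derive_val _ _ _ _ _ _ _ (is_derive_moebius_Xi0 Du)).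
Qed.

(* The chord from the origin lies below the graph: [Xi0 0 = 0] and [Xi0] is convex. *)
Let Xi_le_mul_derive u : Xi_dom u ->
  Xi v xi rho u t tau <= u * derive1 (fun w => Xi v xi rho w t tau) u.
Proof.
move=> Du; rewrite derive_XiE // XiE //; case: Du => h ku.
have c0 := cos_phase_gt0 h; have Xi0_ge0u := Xi0_ge0 h.
have w0 : 0 < 1 - kappa * Xi0 u by rewrite subr_gt0.
have tangentE : u * dXi0 u - Xi0 u = v / xi * rb * omega * u ^+ 2 / cos (phase u) ^+ 2.
  by rewrite /dXi0 /Xi0; field; rewrite !gt_eqF.
have tangent_ge0 : 0 <= u * dXi0 u - Xi0 u.
  rewrite tangentE; apply: divr_ge0; last exact/ltW/exprn_gt0.
  by apply: mulr_ge0; [apply/ltW; rewrite !mulr_gt0 // invr_gt0 | exact: sqr_ge0].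
rewrite /moebius -subr_ge0.
have -> : u * (dXi0 u / (1 - kappa * Xi0 u) ^+ 2) - Xi0 u / (1 - kappa * Xi0 u) =
    (u * dXi0 u - Xi0 u + Xi0 u * (kappa * Xi0 u)) / (1 - kappa * Xi0 u) ^+ 2.
  by field; rewrite gt_eqF.
apply: divr_ge0; last exact/ltW/exprn_gt0.
by apply: addr_ge0 => //; apply: mulr_ge0 => //; exact: mulr_ge0.
Qed.

Let den u := cos (phase u) - kappa * num u.

Let denE u : Dom0 u -> den u = cos (phase u) * (1 - kappa * Xi0 u).
Proof. by move=> h; rewrite /den Xi0E //; field; rewrite gt_eqF // cos_phase_gt0. Qed.

Let den_gt0 u : Xi_dom u -> 0 < den u.
Proof. by case=> h ku; rewrite denE // mulr_gt0 ?cos_phase_gt0 // subr_gt0. Qed.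

Let Xi_num_den u : Xi_dom u -> Xi v xi rho u t tau = num u / den u.
Proof.
move=> Du; have den0 := den_gt0 Du; case: Du => h ku.
rewrite XiE // /moebius {1}Xi0E //; rewrite denE // in den0 *; field.
by rewrite subr_eq0 eq_sym lt_eqF // gt_eqF // cos_phase_gt0.
Qed.

Let Xi_cvgy (u_ : R^nat) (b : R) : (forall n, Xi_dom (u_ n)) -> u_ @ \oo --> b ->
  ~ Xi_dom b -> (fun n => Xi v xi rho (u_ n) t tau) @ \oo --> +oo.
Proof.
move=> Du cvg_u nDb.
have Dom0_u n : Dom0 (u_ n) by case: (Du n).
have b_ge : umin <= b.
  apply: (closed_cvg _ (@closed_ge R umin) _ _ cvg_u).
  by apply: nearW => n; case/andP: (Dom0_u n) => /ltW.
have b_le : b <= umax.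
  apply: (closed_cvg _ (@closed_le R umax) _ _ cvg_u).
  by apply: nearW => n; case/andP: (Dom0_u n) => _ /ltW.
have b0 : b != 0 by apply: contra_notN nDb => /eqP ->.
have num_b : 0 < num b by rewrite /num mulr_gt0 ?divr_gt0 // mul_sin_omega_gt0 ?b_ge.
have cvg_den : den (u_ n) @[n --> \oo] --> den b.
  rewrite /den; apply: cvgB.
    exact: (@continuous_cvg _ _ _ _ _ u_ (fun w => cos (phase w)) _ (@cos_phase_continuous b) cvg_u).
  by apply: cvgMr; exact: (continuous_cvg _ (@num_continuous b) cvg_u).
have den_b : den b = 0.
  apply/eqP; rewrite eq_le; apply/andP; split; last first.
    by apply: (closed_cvg _ (@closed_ge R 0) _ _ cvg_den); apply: nearW => n; exact/ltW/den_gt0.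
  have [hb|] := boolP (Dom0 b).
    rewrite denE // pmulr_rle0 ?cos_phase_gt0 // subr_le0 leNgt.
    by apply/negP => kb; apply: nDb.
  rewrite /Dom0 !lt_neqAle b_ge b_le !andbT negb_and !negbK => b_end.
  have cos_b : cos (phase b) = 0.
    case/orP: b_end => /eqP b_end; [rewrite -b_end phase_umin cosN | rewrite b_end phase_umax];
      by rewrite cos_pihalf.
  by rewrite /den cos_b sub0r oppr_le0 mulr_ge0 // num_ge0 // b_ge b_le.
have -> : (fun n => Xi v xi rho (u_ n) t tau) = (fun n => num (u_ n) / den (u_ n)).
  by apply/funext => n; exact: Xi_num_den.
apply: cvgr_div_pinfty num_b _ _ _.
- exact: (continuous_cvg _ (@num_continuous b) cvg_u).
- by apply: nearW => n; exact: den_gt0.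
- by rewrite -den_b.
Qed.

Let Xi_derive_cvgy (u_ : R^nat) (b : R) : (forall n, Xi_dom (u_ n)) -> u_ @ \oo --> b ->
  ~ Xi_dom b -> (fun n => `| derive1 (fun w => Xi v xi rho w t tau) (u_ n) |) @ \oo --> +oo.
Proof.
move=> Du cvg_u nDb; apply/cvgryPge => A.
have M_gt0 : 0 < `|b| + 1 by rewrite ltr_pwDr.
near=> n.
have u_lt : `|u_ n| < `|b| + 1.
  by near: n; apply: (cvgr_lt _ (cvg_norm cvg_u)); rewrite ltrDl.
have Xi_ge : A * (`|b| + 1) <= Xi v xi rho (u_ n) t tau.
  by near: n; exact: (cvgry_ge (Xi_cvgy Du cvg_u nDb)).
have := Xi_le_mul_derive (Du n); set d := derive1 _ _ => Xi_le.
suff : A * (`|b| + 1) <= (`|b| + 1) * `|d| by rewrite mulrC ler_pM2l.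
apply: le_trans Xi_ge (le_trans Xi_le (le_trans (ler_norm _) _)).
by rewrite normrM ler_wpM2r // ltW.
Unshelve. all: by end_near. Qed.

Lemma Xi_essentially_smooth : essentially_smooth Xi_dom (fun u => Xi v xi rho u t tau).
Proof.
rewrite /essentially_smooth interior_Xi_dom; split.
- by exists 0.
- by move=> u /Xi_derivable.
- by move=> u_ b Du cvg_u [_ nDb]; exact: (Xi_derive_cvgy Du cvg_u nDb).
Qed.

End Xi_properties.

Theorem lemma5p8 (R : realType) (v xi rho : R)
  (hv : 0 < v) (hxi : 0 < xi) (hrho1 : -1 < rho) (hrho2 : rho < 1)
  (t tau : R) (ht : 0 <= t) (htau : 0 < tau) :
  convex_function (K_tt v xi rho t tau) (fun u => Xi v xi rho u t tau) /\
  essentially_smooth (K_tt v xi rho t tau) (fun u => Xi v xi rho u t tau).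
Proof.
rewrite (K_ttE hv hxi hrho1 hrho2 ht htau); split.
- exact: Xi_convex.
- exact: Xi_essentially_smooth.
Qed.
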